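(* Let $V\subset\mathbb{R}^n$ be a singular irreducible central real algebraic variety with coordinate ring $A=\mathbb{R}[V]$, and let $B$ be an $A$-algebra which is a subring of the ring of continuous semi-algebraic functions on $V$ (containing the polynomial functions). Assume $B$ has the Łojasiewicz property: for any $f,g\in B$ with $\mathcal{Z}(f)\subset\mathcal{Z}(g)$ there exist $h\in B$ and an integer $N$ with $g^N=fh$. Then $B$ has the weak substitution property over points: every ring homomorphism $A\to\mathbb{R}$ admits one and only one extension to a ring homomorphism $B\to\mathbb{R}$.
   Context: $V$ is central if its non-singular points are dense in $V$ for the Euclidean topology. $\mathcal{Z}(f)$ denotes the zero set of $f$ in $V$. *)

From Stdlib Require Import Rdefinitions.
From HB Require Import structures.
From mathcomp Require Import all_boot all_order all_algebra.
From mathcomp Require Import mpoly.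
From mathcomp Require Import Rstruct.

Set Implicit Arguments.
Unset Strict Implicit.
Unset Printing Implicit Defensive.
Import Order.TTheory GRing.Theory Num.Theory.
Local Open Scope ring_scope.

Definition pt (n : nat) := 'I_n -> R.
Definition poly (n : nat) := {mpoly R[n]}.
Definition ev (n : nat) (p : poly n) (x : pt n) : R := p.@[x].

Definition dist2 (n : nat) (x y : pt n) : R := \sum_(i < n) (x i - y i) ^+ 2.

Definition zero_set (n : nat) (S : seq (poly n)) : pt n -> Prop :=
  fun x => forall p, p \in S -> ev p x = 0.

Definition algebraic_set (n : nat) (V : pt n -> Prop) : Prop :=
  exists S : seq (poly n), forall x, V x <-> zero_set S x.

Definition vanishing (n : nat) (V : pt n -> Prop) (p : poly n) : Prop :=
  forall x, V x -> ev p x = 0.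

(* Irreducible: V nonempty and not the union of two proper algebraic
   subsets, i.e. whenever V is covered by two algebraic sets, one of them
   already contains V. *)
Definition irreducible (n : nat) (V : pt n -> Prop) : Prop :=
  (exists x, V x) /\
  forall W1 W2 : pt n -> Prop, algebraic_set W1 -> algebraic_set W2 ->
    (forall x, V x -> W1 x \/ W2 x) ->
    (forall x, V x -> W1 x) \/ (forall x, V x -> W2 x).

Definition is_ideal (n : nat) (P : poly n -> Prop) : Prop :=
  P 0 /\ (forall p q, P p -> P q -> P (p + q)) /\
  (forall p q, P q -> P (p * q)).

Definition is_prime_ideal (n : nat) (P : poly n -> Prop) : Prop :=
  is_ideal P /\ ~ P 1 /\ (forall p q, P (p * q) -> P p \/ P q).

(* There is a chain I(V) <= P_0 < P_1 < ... < P_d of prime ideals of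
   R[x], i.e. a chain of length d of prime ideals of R[V] = R[x]/I(V). *)
Definition krull_dim_ge (n : nat) (V : pt n -> Prop) (d : nat) : Prop :=
  exists P : nat -> poly n -> Prop,
    (forall i : nat, (i <= d)%N -> is_prime_ideal (P i)) /\
    (forall p, vanishing V p -> P 0%N p) /\
    (forall i : nat, (i < d)%N ->
       (forall p, P i p -> P i.+1 p) /\ exists p, P i.+1 p /\ ~ P i p).

Definition dimension (n : nat) (V : pt n -> Prop) (d : nat) : Prop :=
  krull_dim_ge V d /\ ~ krull_dim_ge V d.+1.

Definition generates_vanishing (n : nat) (V : pt n -> Prop)
    (ps : seq (poly n)) : Prop :=
  forall p, vanishing V p <->
    exists qs : 'I_(size ps) -> poly n,
      p = \sum_(i < size ps) qs i * ps`_i.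

Definition jacobian (n : nat) (ps : seq (poly n)) (x : pt n)
    : 'M[R]_(size ps, n) :=
  \matrix_(i < size ps, j < n) ev (mderiv j ps`_i) x.

Definition nonsingular (n : nat) (V : pt n -> Prop) (x : pt n) : Prop :=
  V x /\ exists d ps, dimension V d /\ generates_vanishing V ps /\
    \rank (jacobian ps x) = (n - d)%N.

Definition singular_variety (n : nat) (V : pt n -> Prop) : Prop :=
  exists x, V x /\ ~ nonsingular V x.

Definition central (n : nat) (V : pt n -> Prop) : Prop :=
  forall x, V x -> forall e : R, 0 < e ->
    exists y, nonsingular V y /\ dist2 x y < e ^+ 2.

Definition pts (n : nat) (V : pt n -> Prop) := {x : pt n | V x}.
Definition fn (n : nat) (V : pt n -> Prop) := pts V -> R.

(* Semi-algebraic subsets of R^m: finite unions of basic sets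
   {f = 0, g_1 > 0, ..., g_k > 0}. *)
Definition semialgebraic_set (m : nat) (S : pt m -> Prop) : Prop :=
  exists L : seq (poly m * seq (poly m)), forall y,
    S y <-> exists2 fg, fg \in L &
      ev fg.1 y = 0 /\ forall g, g \in fg.2 -> 0 < ev g y.

Definition graph (n : nat) (V : pt n -> Prop) (f : fn V) : pt n.+1 -> Prop :=
  fun y => exists v : pts V,
    (forall i : 'I_n, y (widen_ord (leqnSn n) i) = sval v i) /\
    y ord_max = f v.

Definition semialgebraic_fun (n : nat) (V : pt n -> Prop) (f : fn V) : Prop :=
  semialgebraic_set (graph f).

Definition continuous_on (n : nat) (V : pt n -> Prop) (f : fn V) : Prop :=
  forall v : pts V, forall e : R, 0 < e -> exists2 d : R, 0 < d &
    forall w : pts V, dist2 (sval v) (sval w) < d ^+ 2 ->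
      `|f v - f w| < e.

(* The coordinate ring R[V], as the ring of polynomial functions on V. *)
Definition polyfun (n : nat) (V : pt n -> Prop) (f : fn V) : Prop :=
  exists p : poly n, forall v : pts V, f v = ev p (sval v).

Definition ring_hom_on (n : nat) (V : pt n -> Prop) (S : fn V -> Prop)
    (phi : fn V -> R) : Prop :=
  (forall f g, S f -> S g -> phi (fun v => f v + g v) = phi f + phi g) /\
  (forall f g, S f -> S g -> phi (fun v => f v * g v) = phi f * phi g) /\
  phi (fun _ => 1) = 1.

Definition admissible_algebra (n : nat) (V : pt n -> Prop) (B : fn V -> Prop)
  : Prop :=
  (forall f, B f -> continuous_on f /\ semialgebraic_fun f) /\
  (forall f, polyfun f -> B f) /\
  (forall f g, B f -> B g -> B (fun v => f v + g v)) /\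
  (forall f, B f -> B (fun v => - f v)) /\
  (forall f g, B f -> B g -> B (fun v => f v * g v)).

Definition lojasiewicz_property (n : nat) (V : pt n -> Prop) (B : fn V -> Prop)
  : Prop :=
  forall f g, B f -> B g -> (forall v, f v = 0 -> g v = 0) ->
    exists h, B h /\ exists N : nat, forall v, g v ^+ N = f v * h v.

Definition weak_substitution_property (n : nat) (V : pt n -> Prop)
    (B : fn V -> Prop) : Prop :=
  forall psi, ring_hom_on (@polyfun n V) psi ->
    (exists phi, ring_hom_on B phi /\ forall f, polyfun f -> phi f = psi f) /\
    (forall phi1 phi2, ring_hom_on B phi1 -> ring_hom_on B phi2 ->
       (forall f, polyfun f -> phi1 f = psi f) ->
       (forall f, polyfun f -> phi2 f = psi f) ->
       forall f, B f -> phi1 f = phi2 f).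

(** Any ring homomorphism [psi : R[V] -> R] restricts to a ring endomorphism of
    the reals, hence to the identity, so [psi] is evaluation at the point [a]
    with coordinates [psi x_i]; [a] lies on [V] because [psi] kills the
    equations of [V].  Evaluation at [a] extends [psi] to [B].  Conversely, let
    [phi] be any extension and [f] in [B].  The zero set of
    [q = |x - a|^2] is [{a}], which lies in the zero set of [g = f - f(a)], so
    the Łojasiewicz property gives [g^N = q h]; applying [phi], which agrees
    with evaluation at [a] on [q], yields [phi(g)^N = 0], i.e. [phi f = f(a)]. *)
From Stdlib Require Import Rdefinitions.
From Stdlib Require Import FunctionalExtensionality ProofIrrelevance.
From mathcomp Require Import all_boot all_order all_algebra mpoly Rstruct lra.
Import Order.TTheory GRing.Theory Num.Theory.
Local Open Scope ring_scope.

Lemma rmorph_archiRcf_id (F : archiRcfType) (s : F -> F) :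
  {morph s : x y / x + y} -> {morph s : x y / x * y} -> s 1 = 1 ->
  forall x, s x = x.
Proof.
move=> sD sM s1.
have s0 : s 0 = 0 by apply: (addrI (s 0)); rewrite -sD !addr0.
have sN x : s (- x) = - s x by apply: (addrI (s x)); rewrite -sD !subrr s0.
have s_mono x y : x <= y -> s x <= s y.
  move=> le_xy; rewrite -subr_ge0 -sN -sD.
  by rewrite -(sqr_sqrtr (_ : 0 <= y - x)) ?subr_ge0 // expr2 sM -expr2 sqr_ge0.
have s_nat k : s k%:R = k%:R.
  by elim: k => [|k IHk]; rewrite ?s0 // mulrS sD s1 IHk -mulrS.
have s_int z : s z%:~R = z%:~R.
  by case: z => k; rewrite ?NegzE ?mulrNz ?sN s_nat.
have s_le x : s x <= x.
  rewrite leNgt; apply/negP => lt_x_sx.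
  (* Scale the gap [s x - x] beyond 1: an integer between [y] and [s y] then
     contradicts monotonicity. *)
  have d_gt0 : 0 < s x - x by rewrite subr_gt0.
  pose k := Num.bound (s x - x)^-1.
  have kd_gt1 : 1 < k%:R * (s x - x).
    by rewrite -ltr_pdivrMr // mul1r archi_boundP // invr_ge0 ltW.
  pose y := k%:R * x; pose m := Num.floor y + 1.
  have sy : s y = k%:R * s x by rewrite sM s_nat.
  have m_gt : y < m%:~R by exact: floorD1_gt.
  have m_le : m%:~R <= y + 1 by rewrite intrD lerD2r floor_le.
  have := s_mono _ _ (ltW m_gt); rewrite s_int sy.
  by move: kd_gt1 m_le; rewrite /y mulrBr; lra.
by move=> x; apply/le_anti; rewrite s_le /= -lerN2 -sN s_le.
Qed.

Lemma mpoly_morph_meval (F : comRingType) (n : nat) (Psi : {mpoly F[n]} -> F) :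
  {morph Psi : p q / p + q} -> {morph Psi : p q / p * q} ->
  (forall c, Psi c%:MP = c) ->
  forall p, Psi p = p.@[fun i => Psi 'X_i].
Proof.
move=> PsiD PsiM PsiC p.
have PsiX q k : Psi (q ^+ k) = Psi q ^+ k.
  elim: k => [|k IHk]; first by rewrite !expr0 -[in RHS](PsiC 1).
  by rewrite !exprS PsiM IHk.
rewrite {1}(mpolyE p) mevalE (big_morph Psi PsiD (PsiC 0)).
apply: eq_bigr => m _; rewrite -mul_mpolyC PsiM PsiC mpolyXE_id.
by rewrite (big_morph Psi PsiM (PsiC 1)); congr (_ * _); apply: eq_bigr => i _.
Qed.

Definition dist2_poly {n : nat} (a : pt n) : {mpoly R[n]} :=
  \sum_(i < n) ('X_i - (a i)%:MP) ^+ 2.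

Lemma ev_dist2_poly {n : nat} (a x : pt n) : ev (dist2_poly a) x = dist2 x a.
Proof.
rewrite /ev /dist2_poly /dist2 (big_morph _ (mevalD x) (meval0 x)).
by apply: eq_bigr => i _; rewrite !expr2 mevalM mevalB mevalXU mevalC.
Qed.

Lemma dist2xx {n : nat} (x : pt n) : dist2 x x = 0.
Proof. by rewrite /dist2 big1 // => i _; rewrite subrr expr0n. Qed.

Lemma dist2_eq0 {n : nat} (x y : pt n) : dist2 x y = 0 -> x = y.
Proof.
move=> /psumr_eq0P sq_eq0; apply: functional_extensionality => i.
by apply/eqP; rewrite -subr_eq0 -sqrf_eq0 sq_eq0 // => j _; exact: sqr_ge0.
Qed.

Definition polyfun_of {n : nat} (V : pt n -> Prop) (p : {mpoly R[n]}) : fn V :=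
  fun v => ev p (sval v).

Lemma polyfun_ofP {n : nat} (V : pt n -> Prop) (p : {mpoly R[n]}) :
  polyfun (polyfun_of V p).
Proof. by exists p. Qed.

Lemma polyfun_ofD {n : nat} (V : pt n -> Prop) (p q : {mpoly R[n]}) :
  polyfun_of V (p + q) = (fun v => polyfun_of V p v + polyfun_of V q v).
Proof. by apply: functional_extensionality => v; exact: mevalD. Qed.

Lemma polyfun_ofM {n : nat} (V : pt n -> Prop) (p q : {mpoly R[n]}) :
  polyfun_of V (p * q) = (fun v => polyfun_of V p v * polyfun_of V q v).
Proof. by apply: functional_extensionality => v; exact: mevalM. Qed.

Lemma polyfun_ofC {n : nat} (V : pt n -> Prop) (c : R) :
  polyfun_of V c%:MP = (fun _ => c).
Proof. by apply: functional_extensionality => v; exact: mevalC. Qed.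

Lemma pts_inj {n : nat} {V : pt n -> Prop} : injective (@sval _ V).
Proof. exact: eq_sig_hprop (fun _ => proof_irrelevance _). Qed.

Lemma polyfun_const {n : nat} {V : pt n -> Prop} (c : R) :
  polyfun (fun _ : pts V => c).
Proof. by exists c%:MP => v; rewrite /ev mevalC. Qed.

Lemma ring_hom_on_eval {n : nat} {V : pt n -> Prop} (S : fn V -> Prop)
    (a : pts V) :
  ring_hom_on S (fun f => f a).
Proof. by []. Qed.

Section HomomorphismsOfTheCoordinateRing.

Context {n : nat} {V : pt n -> Prop} {psi : fn V -> R}.
Hypothesis psi_hom : ring_hom_on (@polyfun n V) psi.

Lemma ring_hom_polyfun_const (c : R) : psi (fun _ => c) = c.
Proof.
have [psiD [psiM psi1]] := psi_hom.
apply: (@rmorph_archiRcf_id _ (fun c => psi (fun _ => c))) => // x y.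
- exact: (psiD (fun _ => x) (fun _ => y) (polyfun_const _) (polyfun_const _)).
- exact: (psiM (fun _ => x) (fun _ => y) (polyfun_const _) (polyfun_const _)).
Qed.

Lemma ring_hom_polyfun_of (p : {mpoly R[n]}) :
  psi (polyfun_of V p) = ev p (fun i => psi (polyfun_of V 'X_i)).
Proof.
have [psiD [psiM _]] := psi_hom.
apply: (@mpoly_morph_meval _ _ (fun q => psi (polyfun_of V q))) => [q r|q r|c].
- by rewrite polyfun_ofD; apply: psiD; exact: polyfun_ofP.
- by rewrite polyfun_ofM; apply: psiM; exact: polyfun_ofP.
- by rewrite polyfun_ofC ring_hom_polyfun_const.
Qed.

Lemma ring_hom_polyfun_is_eval :
  algebraic_set V -> exists a : pts V, forall f, polyfun f -> psi f = f a.
Proof.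
move=> [S defV]; pose a i := psi (polyfun_of V 'X_i).
have Va : V a.
  apply/defV => p pS.
  rewrite -ring_hom_polyfun_of -[RHS](ring_hom_polyfun_const 0); congr psi.
  apply: functional_extensionality => v.
  exact: (proj1 (defV _) (svalP v)).
exists (exist _ a Va) => f [p fE].
have -> : f = polyfun_of V p by apply: functional_extensionality.
exact: ring_hom_polyfun_of.
Qed.

End HomomorphismsOfTheCoordinateRing.

Section LojasiewiczUniqueness.

Context {n : nat} {V : pt n -> Prop} {B : fn V -> Prop}.
Hypotheses (admB : admissible_algebra B) (lojB : lojasiewicz_property B).

Lemma fun_exprS (g : fn V) (k : nat) :
  (fun v => g v ^+ k.+1) = (fun v => g v * g v ^+ k).
Proof. by apply: functional_extensionality => v; rewrite exprS. Qed.

Lemma admissible_exp (g : fn V) (k : nat) : B g -> B (fun v => g v ^+ k).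
Proof.
have [_ [B_poly [_ [_ B_mul]]]] := admB.
move=> Bg; elim: k => [|k IHk]; first exact/B_poly/polyfun_const.
by rewrite fun_exprS; exact: B_mul.
Qed.

Lemma ring_hom_on_exp (phi : fn V -> R) (g : fn V) (k : nat) :
  ring_hom_on B phi -> B g -> phi (fun v => g v ^+ k) = phi g ^+ k.
Proof.
move=> [_ [phiM phi1]] Bg; elim: k => [|k IHk].
  by rewrite expr0 -phi1; congr phi; apply: functional_extensionality.
by rewrite fun_exprS phiM ?IHk -?exprS //; exact: admissible_exp.
Qed.

Lemma ring_hom_on_eval_unique {phi : fn V -> R} {a : pts V} :
  ring_hom_on B phi -> (forall f, polyfun f -> phi f = f a) ->
  forall f, B f -> phi f = f a.
Proof.
move=> phi_hom phi_a f Bf.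
have [_ [B_poly [B_add _]]] := admB.
have [phiD [phiM _]] := phi_hom.
pose g v := f v + - f a.
have Bc : B (fun _ => - f a) by exact/B_poly/polyfun_const.
have Bg : B g by exact: B_add.
pose q := polyfun_of V (dist2_poly (sval a)).
have Bq : B q by exact/B_poly/polyfun_ofP.
have q_a : phi q = 0.
  rewrite phi_a; last exact: polyfun_ofP.
  by rewrite /q /polyfun_of ev_dist2_poly dist2xx.
have Zq_Zg v : q v = 0 -> g v = 0.
  rewrite /q /polyfun_of ev_dist2_poly => /dist2_eq0 /pts_inj ->.
  exact: subrr.
have [h [Bh [N gN]]] := lojB _ _ Bq Bg Zq_Zg.
have : phi g ^+ N = 0.
  rewrite -(ring_hom_on_exp _ _ N phi_hom Bg).
  have -> : (fun v => g v ^+ N) = (fun v => q v * h v).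
    by apply: functional_extensionality => v; rewrite gN.
  by rewrite phiM // q_a mul0r.
move/eqP; rewrite expf_eq0 => /andP[_ /eqP].
rewrite phiD // (phi_a (fun _ => - f a)); last exact: polyfun_const.
by move/eqP; rewrite subr_eq0 => /eqP.
Qed.

End LojasiewiczUniqueness.

Theorem proposition4p1 (n : nat) (V : pt n -> Prop) (B : fn V -> Prop) :
  algebraic_set V -> irreducible V -> singular_variety V -> central V ->
  admissible_algebra B -> lojasiewicz_property B ->
  weak_substitution_property B.
Proof.
move=> algV _ _ _ admB lojB psi psi_hom.
have [a psi_a] := ring_hom_polyfun_is_eval psi_hom algV.
split.
  by exists (fun f => f a); split; [exact: ring_hom_on_eval | move=> f /psi_a].
move=> phi1 phi2 phi1_hom phi2_hom phi1_psi phi2_psi f Bf.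
have eval_a phi : ring_hom_on B phi -> (forall f, polyfun f -> phi f = psi f) ->
    phi f = f a.
  move=> phi_hom phi_psi.
  apply: (ring_hom_on_eval_unique admB lojB phi_hom _ f Bf) => g Pg.
  by rewrite phi_psi ?psi_a.
by rewrite (eval_a _ phi1_hom phi1_psi) (eval_a _ phi2_hom phi2_psi).
Qed.
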